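(* Let $I\subseteq R$ be a good ideal. Then for every integer $t\ge0$, $$I_{t+1,0,\dots,0}=(I_{t,0,\dots,0}\cdot I):\langle\mu_1\rangle.$$
   Context: Let $\mathbb K$ be a field, $R=\mathbb K[x_1,\dots,x_n]$, $\mathfrak m=\langle x_1,\dots,x_n\rangle$, $\mathbb N=\{0,1,2,\dots\}$. A monomial $x_1^{\alpha_1}\cdots x_n^{\alpha_n}$ is identified with the point $(\alpha_1,\dots,\alpha_n)\in\mathbb N^n$. For a monomial ideal $I$, $G(I)$ denotes its (unique) minimal monomial generating set. If $I$ is an $\mathfrak m$-primary monomial ideal, then for each $i$ there is a unique $d_i\ge1$ with $x_i^{d_i}\in G(I)$; write $\mu_i=x_i^{d_i}$. For $(a_1,\dots,a_n)\in\mathbb N^n$ the box associated to $I$ is $B_{a_1,\dots,a_n}=([a_1d_1,(a_1+1)d_1]\times\cdots\times[a_nd_n,(a_n+1)d_n])\cap\mathbb N^n$; a monomial belongs to a box if its exponent vector does. An $\mathfrak m$-primary monomial ideal $I$ is called good if for every integer $l\ge1$, every element of $G(I^l)$ belongs to some box $B_{a_1,\dots,a_n}$ with $a_1+\dots+a_n=l-1$. For a good ideal $I$ and $a=(a_1,\dots,a_n)\in\mathbb N^n$, with $l=a_1+\dots+a_n+1$, define $I_{a_1,\dots,a_n}=\left\langle \frac{m}{\mu_1^{a_1}\cdots\mu_n^{a_n}} : m\in B_{a_1,\dots,a_n}\cap G(I^l)\right\rangle$. *)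

(* Monomial ideals of K[x_1,...,x_n] are encoded
   combinatorially: a monomial is its exponent vector in N^n, and a monomial
   ideal is identified with the (upward closed) set of exponent vectors of the
   monomials it contains.  Variable x_1 is index ord0 of 'I_n. *)
From mathcomp Require Import all_boot.
Set Implicit Arguments.
Unset Strict Implicit.
Unset Printing Implicit Defensive.

Definition expv (n : nat) := 'I_n -> nat.

Definition monset (n : nat) := expv n -> Prop.

Definition mdiv n (a b : expv n) : Prop := forall i, a i <= b i.

Definition mmul n (a b : expv n) : expv n := fun i => a i + b i.

Definition xpow n (i : 'I_n) (k : nat) : expv n :=
  fun j => if j == i then k else 0.

Definition mone n : expv n := fun _ => 0.

Definition is_monideal n (I : monset n) : Prop :=
  forall a b, I a -> mdiv a b -> I b.

Definition mgen n (S : monset n) : monset n :=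
  fun b => exists2 a, S a & mdiv a b.

Definition minGen n (I : monset n) : monset n :=
  fun a => I a /\ forall b, I b -> mdiv b a -> forall i, b i = a i.

Definition mprod n (J K : monset n) : monset n :=
  fun b => exists a c, [/\ J a, K c & mdiv (mmul a c) b].

Fixpoint mpow n (I : monset n) (l : nat) : monset n :=
  match l with
  | 0 => fun _ => True
  | l'.+1 => mprod (mpow I l') I
  end.

Definition mcolon n (J : monset n) (m : expv n) : monset n :=
  fun b => J (mmul b m).

Definition msame n (J K : monset n) : Prop := forall b, J b <-> K b.

(* m-primary monomial ideal, with d i the exponent such that x_i^(d i) is in
   G(I) (it is unique, so we take it as a parameter constrained by this) *)
Definition m_primary n (I : monset n) (d : 'I_n -> nat) : Prop :=
  [/\ is_monideal I, ~ I (@mone n), forall i, 1 <= d i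
    & forall i, minGen I (xpow i (d i))].

Definition inBox n (d : 'I_n -> nat) (a : expv n) (m : expv n) : Prop :=
  forall i, a i * d i <= m i <= (a i).+1 * d i.

Definition esum n (a : expv n) : nat := \sum_(i < n) a i.

Definition good n (I : monset n) (d : 'I_n -> nat) : Prop :=
  m_primary I d /\
  forall l, 1 <= l -> forall m, minGen (mpow I l) m ->
    exists a : expv n, esum a = l.-1 /\ inBox d a m.

Definition Ia n (I : monset n) (d : 'I_n -> nat) (a : expv n) : monset n :=
  mgen (fun q => exists m, [/\ inBox d a m, minGen (mpow I (esum a).+1) m
                            & forall i, q i = m i - a i * d i]).

Definition t0 n (t : nat) : expv n.+1 := xpow ord0 t.

(* Write μ_1 = x_1^(d_1).  For the inclusion of I_(t+1,0,...,0) in the colon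
   ideal, factor a minimal generator m of I^(t+2) lying in B_(t+1,0,...,0) as
   m = p c with p in I^(t+1) and c in I: minimality of m forces p to be a
   minimal generator of I^(t+1), c_1 <= d_1 and p_1 <= (t+1) d_1, so p lies in
   B_(t,0,...,0).  Conversely, if b μ_1 is divisible by (p / μ_1^t) c, then
   U = b μ_1^(t+1) lies in I^(t+2) with U_1 >= (t+1) d_1, and every such U is
   divisible by a minimal generator of I^(t+2) lying in B_(t+1,0,...,0).  If
   U_j >= d_j for some j <> 1, take μ_1^(t+1) μ_j: applied to high powers of I,
   goodness gives sum_i b_i / d_i >= l for every b in I^l, so no proper divisor
   of μ_1^(t+1) μ_j lies in I^(t+2).  Otherwise every minimal generator
   dividing U has x_j-degree < d_j for j <> 1, which pins its box down to
   B_(t+1,0,...,0). *)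

From mathcomp Require Import all_boot zify.
From Stdlib Require Import Classical.
Set Implicit Arguments.
Unset Strict Implicit.
Unset Printing Implicit Defensive.

Section Monomials.
Variable n : nat.
Implicit Types (a b c m : expv n) (J K : monset n).

Lemma mdiv_trans a b c : mdiv a b -> mdiv b c -> mdiv a c.
Proof. by move=> hab hbc i; apply: leq_trans (hab i) (hbc i). Qed.

Definition mscale k a : expv n := fun i => k * a i.

Definition wdeg (w a : expv n) : nat := \sum_(i < n) a i * w i.

Lemma wdeg_mdiv w a b : mdiv a b -> wdeg w a <= wdeg w b.
Proof. by move=> hab; apply: leq_sum => i _; rewrite leq_mul. Qed.

Lemma wdeg_mdiv_lt w a b i :
  0 < w i -> mdiv a b -> a i < b i -> wdeg w a < wdeg w b.
Proof.
move=> hw hab hi; rewrite /wdeg (bigD1 i) //= [X in _ < X](bigD1 i) //=.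
by rewrite -addSn leq_add ?ltn_pmul2r //; apply: leq_sum => j _; rewrite leq_mul.
Qed.

Lemma wdeg_mdiv_eq w a b : (forall i, 0 < w i) -> mdiv a b ->
  wdeg w b <= wdeg w a -> forall i, a i = b i.
Proof.
move=> hw hab hba i; apply/anti_leq; rewrite hab leqNgt /=; apply/negP => lt.
by have := wdeg_mdiv_lt (hw i) hab lt; rewrite ltnNge hba.
Qed.

Lemma wdeg_mmul w a b : wdeg w (mmul a b) = wdeg w a + wdeg w b.
Proof. by rewrite /wdeg -big_split; apply: eq_bigr => i _; rewrite mulnDl. Qed.

Lemma wdeg_mscale w k a : wdeg w (mscale k a) = k * wdeg w a.
Proof. by rewrite /wdeg big_distrr; apply: eq_bigr => i _; rewrite -mulnA. Qed.

Lemma wdeg_xpow w (i : 'I_n) k : wdeg w (xpow i k) = k * w i.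
Proof.
rewrite /wdeg (bigD1 i) //= big1 ?addn0 => [|j /negbTE hj]; rewrite /xpow ?eqxx //.
by rewrite hj.
Qed.

Lemma esum_xpow (i : 'I_n) k : esum (xpow i k) = k.
Proof.
rewrite /esum (bigD1 i) //= big1 ?addn0 => [|j /negbTE hj]; rewrite /xpow ?eqxx //.
by rewrite hj.
Qed.

Lemma minGen_exists (P : monset n) b : P b -> exists2 m, minGen P m & mdiv m b.
Proof.
suff: forall k b, wdeg (fun=> 1) b < k -> P b -> exists2 m, minGen P m & mdiv m b.
  by apply; apply: ltnSn.
elim=> // k IH {}b hk hb.
case: (classic (exists2 b', P b' & mdiv b' b /\ exists i, b' i < b i)).
  move=> [b' hb' [hdiv [i hi]]].
  have [|m hm hmb'] := IH b' _ hb'.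
    exact: leq_trans (wdeg_mdiv_lt (w := fun=> 1) isT hdiv hi) hk.
  by exists m => //; apply: mdiv_trans hdiv.
move=> hno; exists b => //; split => // b' hb' hdiv i.
apply/anti_leq; rewrite hdiv leqNgt /=; apply/negP => lt.
by apply: hno; exists b' => //; split => //; exists i.
Qed.

Lemma mpow_monideal J l : is_monideal (mpow J l).
Proof.
case: l => [//|l] a b [p [c [hp hc hpc]]] hab.
by exists p, c; split => //; apply: mdiv_trans hab.
Qed.

Lemma mpow1 J a : J a -> mpow J 1 a.
Proof. by move=> ha; exists (@mone n), a; split. Qed.

Lemma mpowD J k l a c : mpow J k a -> mpow J l c -> mpow J (k + l) (mmul a c).
Proof.
elim: l c => [|l IH] c ha hc.
  by rewrite addn0; apply: mpow_monideal ha _ => i; apply: leq_addr.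
rewrite addnS; case: hc => [c1 [c2 [hc1 hc2 hc12]]].
exists (mmul a c1), c2; split => //; first exact: IH.
by move=> i; have := hc12 i; rewrite /mmul -addnA leq_add2l.
Qed.

Lemma mpowM J k l a : mpow J l a -> mpow J (k * l) (mscale k a).
Proof.
move=> ha; elim: k => [//|k IH]; rewrite mulSn.
by apply: mpow_monideal (mpowD ha IH) _ => i; rewrite /mmul /mscale mulSn.
Qed.

Lemma minGen_mprod J K m a c : minGen (mprod J K) m -> J a -> K c ->
  mdiv (mmul a c) m -> (forall i, a i + c i = m i) /\ minGen J a.
Proof.
move=> [_ hmin] ha hc hacm.
have mprod_mmul b : J b -> mprod J K (mmul b c) by exists b, c; split.
have hac : forall i, a i + c i = m i by apply: hmin (mprod_mmul _ ha) hacm.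
split=> //; split=> // b hb hba i; apply/(@addIn (c i)).
by rewrite hac; apply: hmin (mprod_mmul _ hb) _ _ => j; rewrite -hac leq_add2r.
Qed.

Lemma minGen_mprod_le J K m a c i k : minGen (mprod J K) m -> J a -> K c ->
  mdiv (mmul a c) m -> K (xpow i k) -> c i <= k.
Proof.
move=> hm ha hc hacm hk; have [hac _] := minGen_mprod hm ha hc hacm.
rewrite leqNgt; apply/negP => hki.
have hdiv : mdiv (mmul a (xpow i k)) m.
  move=> j; rewrite /mmul /xpow -hac; case: eqVneq => [->|_].
    by rewrite leq_add2l ltnW.
  by rewrite addn0 leq_addr.
have hprod : mprod J K (mmul a (xpow i k)) by exists a, (xpow i k); split.
have := hm.2 _ hprod hdiv i; rewrite /mmul /xpow eqxx -hac => /eqP.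
by rewrite eqn_add2l => /eqP hik; rewrite hik ltnn in hki.
Qed.

Lemma IaP I d a b : Ia I d a b <-> exists m,
  [/\ inBox d a m, minGen (mpow I (esum a).+1) m & mdiv (fun i => m i - a i * d i) b].
Proof.
split=> [[q [m [hbox hm hq]] hqb]|[m [hbox hm hmb]]].
  by exists m; split=> // i; rewrite -hq.
by exists (fun i => m i - a i * d i) => //; exists m.
Qed.
End Monomials.

Section GoodIdeal.
Variables (n : nat) (I : monset n) (d : 'I_n -> nat).
Hypothesis hgood : good I d.

Lemma d_gt0 i : 0 < d i.
Proof. by case: hgood => [[_ _ hd _] _]. Qed.

Lemma I_xpow i : I (xpow i (d i)).
Proof. by case: hgood => [[_ _ _ hmin] _]; case: (hmin i). Qed.

Let D := \prod_(i < n) d i.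

(* [wdeg dweight b] is D * sum_i b_i / d_i. *)
Definition dweight i := \prod_(j < n | j != i) d j.

Lemma d_mul_dweight i : d i * dweight i = D.
Proof. by rewrite /D (bigD1 i). Qed.

Lemma dweight_gt0 i : 0 < dweight i.
Proof. by apply: prodn_gt0 => j; apply: d_gt0. Qed.

Lemma inBox_wdeg a m : inBox d a m -> esum a * D <= wdeg dweight m.
Proof.
move=> hbox; rewrite /esum big_distrl; apply: leq_sum => i _.
by rewrite -(d_mul_dweight i) /= mulnA leq_mul2r (andP (hbox i)).1 orbT.
Qed.

Lemma mpow_wdeg l b : mpow I l b -> l * D <= wdeg dweight b.
Proof.
case: l => [//|l] hb; rewrite leqNgt; apply/negP => hlt.
have hD : 0 < D by apply: prodn_gt0 => i; apply: d_gt0.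
(* Goodness bounds the degree on I^k only by k - 1; passing to b^(D+1) makes
   this loss smaller than one unit of the weighted degree. *)
have [m hm hmb] := minGen_exists (mpowM D.+1 hb).
have [|a [ha hbox]] := hgood.2 (D.+1 * l.+1) _ m hm; first by rewrite muln_gt0.
have := leq_trans (inBox_wdeg hbox) (wdeg_mdiv dweight hmb).
by rewrite ha wdeg_mscale; nia.
Qed.

Lemma mpow_xpow i k : mpow I k (xpow i (k * d i)).
Proof.
rewrite -[in mpow I k](muln1 k).
apply: mpow_monideal (mpowM k (mpow1 (I_xpow i))) _ => j.
by rewrite /mscale /xpow; case: eqP; rewrite ?muln0.
Qed.

Lemma minGen_mpow_le l p i : minGen (mpow I l) p -> p i <= l * d i.
Proof.
move=> [hp hmin]; rewrite leqNgt; apply/negP => hlt.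
have hdiv : mdiv (xpow i (l * d i)) p.
  by move=> j; rewrite /xpow; case: eqP => [->|_] //; apply: ltnW.
have := hmin _ (mpow_xpow i l) hdiv i; rewrite /xpow eqxx => hpi.
by rewrite hpi ltnn in hlt.
Qed.
End GoodIdeal.

Section FirstVariable.
Variables (n : nat) (I : monset n.+1) (d : 'I_n.+1 -> nat).
Hypothesis hgood : good I d.

Lemma inBox_t0 s m : inBox d (t0 s) m <->
  s * d ord0 <= m ord0 <= s.+1 * d ord0 /\ forall i, i != ord0 -> m i <= d i.
Proof.
split=> [hbox|[hm0 hmi] i].
  split=> [|i hi]; first by have := hbox ord0; rewrite /t0 /xpow eqxx.
  by have := hbox i; rewrite /t0 /xpow (negbTE hi) mul1n => /andP[].
by rewrite /t0 /xpow; case: eqVneq => [->|hi] //=; rewrite mul1n hmi.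
Qed.

Definition corner s j : expv n.+1 := mmul (xpow ord0 (s * d ord0)) (xpow j (d j)).

Lemma minGen_corner s j : j != ord0 -> minGen (mpow I s.+1) (corner s j).
Proof.
move=> hj; have hcorner : mpow I s.+1 (corner s j).
  by rewrite -[s.+1]addn1; apply: mpowD (mpow_xpow hgood _ _) (mpow1 (I_xpow hgood j)).
split=> // b hb hdiv; apply: (wdeg_mdiv_eq (w := dweight d) _ hdiv).
  exact: dweight_gt0 hgood.
rewrite wdeg_mmul !wdeg_xpow -mulnA !d_mul_dweight -mulSnr.
by have := mpow_wdeg hgood hb.
Qed.

Lemma mpow_boxed_divisor s U : mpow I s.+1 U -> s * d ord0 <= U ord0 ->
  exists m, [/\ inBox d (t0 s) m, minGen (mpow I s.+1) m & mdiv m U].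
Proof.
move=> hU hU0.
case: (boolP [exists j, (j != ord0) && (d j <= U j)]) => [/existsP[j /andP[hj hdj]]|].
  exists (corner s j); split; last first.
  - move=> i; rewrite /corner /mmul /xpow.
    case: eqVneq => [->|_]; first by rewrite eq_sym (negbTE hj) addn0.
    by case: eqVneq => [->|_].
  - exact: minGen_corner.
  apply/inBox_t0; rewrite /corner /mmul /xpow eqxx eq_sym (negbTE hj) addn0.
  split; first by rewrite leqnn mulSn leq_addl.
  by move=> i /negbTE ->; case: eqVneq => [->|].
move=> /existsPn hsmall.
have [m hm hmU] := minGen_exists hU.
have hmi i : i != ord0 -> m i < d i.
  move=> hi; have := hsmall i; rewrite hi /= -ltnNge; exact: leq_ltn_trans (hmU i).
have [a [ha hbox]] := hgood.2 s.+1 isT m hm.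
have ha0 i : i != ord0 -> a i = 0.
  move=> hi; have := hbox i; have := hmi i hi; have := d_gt0 hgood i; nia.
have ha_ord0 : a ord0 = s.
  by rewrite -[s]ha /esum (bigD1 ord0) //= big1 ?addn0.
exists m; split => //; apply/inBox_t0; split; first by rewrite -ha_ord0 hbox.
by move=> i hi; apply: ltnW; apply: hmi.
Qed.

Lemma Ia_t0S_sub_colon t b : Ia I d (t0 t.+1) b ->
  mcolon (mprod (Ia I d (t0 t)) I) (xpow ord0 (d ord0)) b.
Proof.
case/IaP=> m []; rewrite esum_xpow => /inBox_t0[hm0 hmi] hmin hmb.
have [p [c [hp hc hpcm]]] := hmin.1.
have [hpc hpmin] := minGen_mprod (J := mpow I t.+1) hmin hp hc hpcm.
have hc0 : c ord0 <= d ord0 := minGen_mprod_le hmin hp hc hpcm (I_xpow hgood ord0).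
have hp0 : p ord0 <= t.+1 * d ord0 := minGen_mpow_le hgood ord0 hpmin.
exists (fun i => p i - t0 t i * d i), c; split => //.
  apply/IaP; exists p; rewrite esum_xpow; split => //; apply/inBox_t0; split.
    by have := hpc ord0; lia.
  by move=> i hi; have := hpc i; have := hmi i hi; lia.
move=> i; have := hmb i; have := hpc i; rewrite /mmul /t0 /xpow.
by case: eqVneq => [->|hi] /=; lia.
Qed.

Lemma colon_sub_Ia_t0S t b :
  mcolon (mprod (Ia I d (t0 t)) I) (xpow ord0 (d ord0)) b -> Ia I d (t0 t.+1) b.
Proof.
case=> u [c [/IaP[p []]]]; rewrite esum_xpow => /inBox_t0[hp0 _] hpmin hpu hc hdiv.
pose U := mmul b (xpow ord0 (t.+1 * d ord0)).
have hU : mpow I t.+2 U.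
  exists p, c; split => //; first exact: hpmin.1.
  move=> i; have := hpu i; have := hdiv i; rewrite /U /mmul /t0 /xpow.
  by case: eqVneq => [->|hi] /=; lia.
have [|m [hm hmin hmU]] := mpow_boxed_divisor hU.
  by rewrite /U /mmul /xpow eqxx leq_addl.
apply/IaP; exists m; rewrite esum_xpow; split => // i.
by have := hmU i; rewrite /U /mmul /t0 /xpow; case: eqVneq => [->|hi] /=; lia.
Qed.
End FirstVariable.

Theorem mainTheorem11 (n : nat) (I : monset n.+1) (d : 'I_n.+1 -> nat) :
  good I d ->
  forall t : nat,
    msame (Ia I d (@t0 n t.+1))
          (mcolon (mprod (Ia I d (@t0 n t)) I) (xpow ord0 (d ord0))).
Proof.
move=> hgood t b; split; [exact: Ia_t0S_sub_colon | exact: colon_sub_Ia_t0S].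
Qed.
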